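(* Let $\mu$ be any positive measure and let $Y$ be a uniformly monotone Banach function space. Then the pair $(L_\infty(\mu),Y)$ has the Bishop-Phelps-Bollobás property for positive operators. Moreover, the function $\eta$ in the definition of this property can be chosen depending only on the modulus of uniform monotonicity of $Y$.
   Context: All spaces are real. For a Banach space $X$, $B_X$ and $S_X$ denote the closed unit ball and unit sphere; $L(X,Y)$ is the space of bounded linear operators with the operator norm. An operator $T$ between Banach lattices is positive if $x\ge0$ implies $Tx\ge 0$. A Banach space $Y$ is a Banach function space on a measure space $(\Omega,\nu)$ if $Y$ is an ideal in the space $L^0(\nu)$ of (a.e. classes of) real measurable functions on $\Omega$ and $|x|\le|y|$ a.e. with $x,y\in Y$ implies $\Vert x\Vert\le\Vert y\Vert$. A Banach lattice $E$ is uniformly monotone if for every $\varepsilon>0$ there is $\delta(\varepsilon)>0$ (the modulus of uniform monotonicity) such that whenever $x\in S_E$, $y\in E$, $x,y\ge0$, and $\Vert x+y\Vert\le 1+\delta(\varepsilon)$, then $\Vert y\Vert\le\varepsilon$. A pair $(X,Y)$ of Banach lattices has the Bishop-Phelps-Bollobás property for positive operators if for every $0<\varepsilon<1$ there exists $0<\eta(\varepsilon)<\varepsilon$ such that for every positive $S\in S_{L(X,Y)}$ and every $x_0\in S_X$ with $\Vert S(x_0)\Vert>1-\eta(\varepsilon)$, there exist $u_0\in S_X$ and a positive operator $T\in S_{L(X,Y)}$ with $\Vert T(u_0)\Vert=1$, $\Vert u_0-x_0\Vert<\varepsilon$ and $\Vert T-S\Vert<\varepsilon$. *)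

From HB Require Import structures.
From mathcomp Require Import all_boot all_order all_algebra.
From mathcomp Require Import all_classical all_reals all_analysis.
From mathcomp Require Import ess_sup_inf.
Set Implicit Arguments. Unset Strict Implicit. Unset Printing Implicit Defensive.
Import Order.TTheory GRing.Theory Num.Theory.
Import numFieldNormedType.Exports.
Local Open Scope classical_set_scope.
Local Open Scope ring_scope.

Definition ae_le d (T : measurableType d) (R : realType)
  (mu : {measure set T -> \bar R}) (f g : T -> R) : Prop :=
  \forall t \ae mu, f t <= g t.

Definition ae_eq d (T : measurableType d) (R : realType)
  (mu : {measure set T -> \bar R}) (f g : T -> R) : Prop :=
  \forall t \ae mu, f t = g t.

(* L_infty(mu): measurable, essentially bounded functions (representatives) *)
Definition Linf d (T : measurableType d) (R : realType)
  (mu : {measure set T -> \bar R}) (f : T -> R) : Prop :=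
  measurable_fun setT f /\ (ess_sup mu (fun t => (`|f t|)%:E) < +oo)%E.

Definition linf_norm d (T : measurableType d) (R : realType)
  (mu : {measure set T -> \bar R}) (f : T -> R) : R :=
  fine (ess_sup mu (fun t => (`|f t|)%:E)).

Definition banach_function_space d (Om : measurableType d) (R : realType)
  (nu : {measure set Om -> \bar R}) (Y : set (Om -> R)) (N : (Om -> R) -> R)
  : Prop :=
  (forall y, Y y -> measurable_fun setT y) /\
  [/\ Y (fun _ => 0),
      (forall x y, Y x -> Y y -> Y (fun t => x t + y t)),
      (forall (c : R) x, Y x -> Y (fun t => c * x t)) &
      (forall (x y : Om -> R), measurable_fun setT x -> Y y ->
         ae_le nu (fun t => `|x t|) (fun t => `|y t|) -> Y x)] /\
  [/\ (forall x, Y x -> (N x = 0 <-> ae_eq nu x (fun _ => 0))),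
      (forall x y, Y x -> Y y -> N (fun t => x t + y t) <= N x + N y),
      (forall (c : R) x, Y x -> N (fun t => c * x t) = `|c| * N x),
      (forall x y, Y x -> Y y ->
         ae_le nu (fun t => `|x t|) (fun t => `|y t|) -> N x <= N y) &
      (forall u : nat -> Om -> R, (forall n, Y (u n)) ->
        (forall e : R, 0 < e -> exists M, forall m n, (M <= m)%N -> (M <= n)%N ->
            N (fun t => u m t - u n t) < e) ->
        exists y, Y y /\ forall e : R, 0 < e -> exists M, forall n, (M <= n)%N ->
            N (fun t => u n t - y t) < e)].

Definition unif_monotone_with d (Om : measurableType d) (R : realType)
  (nu : {measure set Om -> \bar R}) (Y : set (Om -> R)) (N : (Om -> R) -> R)
  (delta : R -> R) : Prop :=
  forall eps : R, 0 < eps -> forall x y, Y x -> Y y -> N x = 1 ->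
    ae_le nu (fun _ => 0) x -> ae_le nu (fun _ => 0) y ->
    N (fun t => x t + y t) <= 1 + delta eps -> N y <= eps.

(* S is a bounded linear operator L_infty(mu) -> Y (acting on representatives,
   compatible with a.e. equality) *)
Definition bounded_op d (T : measurableType d) d' (Om : measurableType d')
  (R : realType) (mu : {measure set T -> \bar R}) (nu : {measure set Om -> \bar R})
  (Y : set (Om -> R)) (N : (Om -> R) -> R) (S : (T -> R) -> (Om -> R)) : Prop :=
  [/\ (forall f, Linf mu f -> Y (S f)),
      (forall f g, Linf mu f -> Linf mu g -> ae_eq mu f g -> ae_eq nu (S f) (S g)),
      (forall (a : R) f g, Linf mu f -> Linf mu g ->
         ae_eq nu (S (fun t => a * f t + g t)) (fun w => a * S f w + S g w)) &
      (exists C : R, forall f, Linf mu f -> N (S f) <= C * linf_norm mu f)].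

Definition positive_op d (T : measurableType d) d' (Om : measurableType d')
  (R : realType) (mu : {measure set T -> \bar R}) (nu : {measure set Om -> \bar R})
  (S : (T -> R) -> (Om -> R)) : Prop :=
  forall f, Linf mu f -> ae_le mu (fun _ => 0) f -> ae_le nu (fun _ => 0) (S f).

Definition op_norm d (T : measurableType d) d' (Om : measurableType d')
  (R : realType) (mu : {measure set T -> \bar R})
  (N : (Om -> R) -> R) (S : (T -> R) -> (Om -> R)) : R :=
  sup [set N (S f) | f in [set f | Linf mu f /\ linf_norm mu f <= 1]].

Definition BPBp_pos_with d (T : measurableType d) d' (Om : measurableType d')
  (R : realType) (mu : {measure set T -> \bar R}) (nu : {measure set Om -> \bar R})
  (Y : set (Om -> R)) (N : (Om -> R) -> R) (eta : R -> R) : Prop :=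
  forall eps : R, 0 < eps < 1 ->
  forall (S : (T -> R) -> (Om -> R)) (x0 : T -> R),
    bounded_op mu nu Y N S -> positive_op mu nu S -> op_norm mu N S = 1 ->
    Linf mu x0 -> linf_norm mu x0 = 1 ->
    N (S x0) > 1 - eta eps ->
    exists (u0 : T -> R) (Top : (T -> R) -> (Om -> R)),
      [/\ Linf mu u0, linf_norm mu u0 = 1,
          bounded_op mu nu Y N Top, positive_op mu nu Top & op_norm mu N Top = 1] /\
      [/\ N (Top u0) = 1,
          linf_norm mu (fun t => u0 t - x0 t) < eps &
          op_norm mu N (fun f w => Top f w - S f w) < eps].

From Pilot Require Import Defs.
From HB Require Import structures.
From mathcomp Require Import all_boot all_order all_algebra.
From mathcomp Require Import all_classical all_reals all_analysis.
From mathcomp Require Import ess_sup_inf measurable_realfun.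
From mathcomp Require Import lra ring.
Set Implicit Arguments. Unset Strict Implicit. Unset Printing Implicit Defensive.
Import Order.TTheory GRing.Theory Num.Theory.
Import numFieldNormedType.Exports.
Local Open Scope classical_set_scope.
Local Open Scope ring_scope.

(* Since [S] is positive, its norm is [N (S 1)].  Split [T] into the sets
   where [x0 > 1 - eps/2], where [x0 < eps/2 - 1], and the rest, and split [Om]
   according to the sign of [S x0].  Where [S x0 >= 0] keep only the part of [S]
   living on the first set, where [S x0 < 0] only the part living on the second.
   The discarded part [D] satisfies [|S x0| + eps/2 * D <= S 1], so uniform
   monotonicity forces [N D <= eps/4] as soon as [N (S x0) > 1 - eta].
   Renormalising what is kept gives a positive operator of norm one, within
   [eps/2] of [S], which attains its norm at
   [u0 = 1_{x0 > 1 - eps/2} - 1_{x0 < eps/2 - 1} + x0 1_{|x0| <= 1 - eps/2}],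
   and [u0] is [eps/2]-close to [x0]. *)

Section EssentiallyBounded.
Context (R : realType) d (T : measurableType d) (mu : {measure set T -> \bar R}).
Implicit Types (f g h : T -> R) (c : R).

Lemma Linf_measurable f : Linf mu f -> measurable_fun setT f.
Proof. by case. Qed.

Lemma linf_norm_ae f : Linf mu f -> \forall t \ae mu, `|f t| <= linf_norm mu f.
Proof.
move=> [_ fin]; have := ess_sup_ge mu (fun t => (`|f t|)%:E).
rewrite /linf_norm; move: fin.
case: (ess_sup mu (fun t => (`|f t|)%:E)) => [r| |] //= _ H.
by apply: filterS H => t; rewrite leeNy_eq.
Qed.

(* [fine] sends the essential supremum [-oo] of a null measure to [0]. *)
Lemma linf_norm_ge0 f : 0 <= linf_norm mu f.
Proof.
rewrite /linf_norm; have := ess_sup_ge mu (fun t => (`|f t|)%:E).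
case E: (ess_sup mu (fun t => (`|f t|)%:E)) => [r| |] //= H.
rewrite leNgt; apply/negP => r_lt0.
have : (ess_sup mu (fun t => (`|f t|)%:E) <= -oo)%E.
  apply/ess_supP; apply: filterS H => t.
  by rewrite lee_fin => /(le_trans (normr_ge0 _)); rewrite leNgt r_lt0.
by rewrite E.
Qed.

Lemma linf_norm_le f c : 0 <= c -> (\forall t \ae mu, `|f t| <= c) ->
  linf_norm mu f <= c.
Proof.
move=> c_ge0 H; have : (ess_sup mu (fun t => (`|f t|)%:E) <= c%:E)%E.
  by apply/ess_supP; apply: filterS H => t; rewrite lee_fin.
by rewrite /linf_norm; case: (ess_sup mu _).
Qed.

Lemma Linf_bounded f c : measurable_fun setT f ->
  (\forall t \ae mu, `|f t| <= c) -> Linf mu f.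
Proof.
move=> mf H; split => //.
have : (ess_sup mu (fun t => (`|f t|)%:E) <= c%:E)%E.
  by apply/ess_supP; apply: filterS H => t; rewrite lee_fin.
by move=> /le_lt_trans; apply; rewrite ltey.
Qed.

Lemma Linf_cst c : Linf mu (fun _ => c).
Proof. by apply: (@Linf_bounded _ `|c|) => //; apply: aeW. Qed.

Lemma LinfZ a f : Linf mu f -> Linf mu (fun t => a * f t).
Proof.
move=> Lf; apply: (@Linf_bounded _ (`|a| * linf_norm mu f)).
  exact: measurable_funM (measurable_cst a) (Linf_measurable Lf).
by apply: filterS (linf_norm_ae Lf) => t ft; rewrite normrM ler_wpM2l.
Qed.

Lemma Linf_comb a f g : Linf mu f -> Linf mu g -> Linf mu (fun t => a * f t + g t).
Proof.
move=> Lf Lg; apply: (@Linf_bounded _ (`|a| * linf_norm mu f + linf_norm mu g)).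
  apply: measurable_funD (Linf_measurable Lg).
  exact: measurable_funM (measurable_cst a) (Linf_measurable Lf).
apply: filterS (filterI (linf_norm_ae Lf) (linf_norm_ae Lg)) => t [ft gt].
by rewrite (le_trans (ler_normD _ _)) // normrM lerD // ler_wpM2l.
Qed.

Lemma LinfD f g : Linf mu f -> Linf mu g -> Linf mu (fun t => f t + g t).
Proof.
move=> Lf Lg; have := Linf_comb 1 Lf Lg.
by congr Linf; apply/funext => t; rewrite mul1r.
Qed.

Lemma Linf_mul_bounded f h : Linf mu f -> measurable_fun setT h ->
  (forall t, `|h t| <= 1) -> Linf mu (fun t => f t * h t).
Proof.
move=> Lf mh h_le1; apply: (@Linf_bounded _ (linf_norm mu f)).
  exact: measurable_funM (Linf_measurable Lf) mh.
apply: filterS (linf_norm_ae Lf) => t ft.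
by rewrite normrM -[X in _ <= X]mulr1 ler_pM.
Qed.

Lemma linf_norm_dominated_eq1 f g : Linf mu f -> linf_norm mu f = 1 ->
  (\forall t \ae mu, `|f t| <= `|g t| <= 1) -> linf_norm mu g = 1.
Proof.
move=> [_ fin] nf1 H.
have ess_f : ess_sup mu (fun t => (`|f t|)%:E) = 1%:E.
  move: fin nf1; rewrite /linf_norm.
  by case: ess_sup => [r _ /= -> | | _ /= /esym/eqP] //; rewrite oner_eq0.
have le1 : (ess_sup mu (fun t => (`|g t|)%:E) <= 1%:E)%E.
  by apply/ess_supP; apply: filterS H => t /andP[_]; rewrite lee_fin.
have ge1 : (1%:E <= ess_sup mu (fun t => (`|g t|)%:E))%E.
  by rewrite -ess_f; apply: le_ess_sup; apply: filterS H => t /andP[+ _].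
by rewrite /linf_norm (@le_anti _ _ (ess_sup _ _) 1%:E) ?le1.
Qed.

End EssentiallyBounded.

Section BanachFunctionSpace.
Context (R : realType) d (Om : measurableType d) (nu : {measure set Om -> \bar R})
  (Y : set (Om -> R)) (N : (Om -> R) -> R).
Hypothesis hY : banach_function_space nu Y N.
Implicit Types (x y h : Om -> R).

Lemma Y_measurable y : Y y -> measurable_fun setT y.
Proof. by case: hY => + _; apply. Qed.

Lemma Y0 : Y (fun _ => 0).
Proof. by case: hY => _ [[]]. Qed.

Lemma YD x y : Y x -> Y y -> Y (fun t => x t + y t).
Proof. by case: hY => _ [[]] _ + _ _ _; apply. Qed.

Lemma YZ (c : R) y : Y y -> Y (fun t => c * y t).
Proof. by case: hY => _ [[]] _ _ + _ _; apply. Qed.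

Lemma Y_ideal x y : measurable_fun setT x -> Y y ->
  (\forall t \ae nu, `|x t| <= `|y t|) -> Y x.
Proof. by case: hY => _ [[]] _ _ _ + _; apply. Qed.

Lemma Y_abs y : Y y -> Y (fun t => `|y t|).
Proof.
move=> Yy; apply: (Y_ideal _ Yy); last by apply: aeW => t; rewrite normr_id.
exact: measurableT_comp (Y_measurable Yy).
Qed.

Lemma Y_mul_bounded h y : measurable_fun setT h -> (forall t, `|h t| <= 1) ->
  Y y -> Y (fun t => h t * y t).
Proof.
move=> mh h_le1 Yy; apply: (Y_ideal _ Yy).
  exact: measurable_funM mh (Y_measurable Yy).
by apply: aeW => t; rewrite normrM -[X in _ <= X]mul1r ler_pM.
Qed.

Lemma N_triangle x y : Y x -> Y y -> N (fun t => x t + y t) <= N x + N y.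
Proof. by case: hY => _ [_ []] _ + _ _ _; apply. Qed.

Lemma NZ (c : R) y : Y y -> N (fun t => c * y t) = `|c| * N y.
Proof. by case: hY => _ [_ []] _ _ + _ _; apply. Qed.

Lemma N_le_ae x y : Y x -> Y y ->
  (\forall t \ae nu, `|x t| <= `|y t|) -> N x <= N y.
Proof. by case: hY => _ [_ []] _ _ _ + _; apply. Qed.

Lemma N_le_dominated x y : measurable_fun setT x -> Y y ->
  (\forall t \ae nu, `|x t| <= `|y t|) -> N x <= N y.
Proof. by move=> mx Yy xy; apply: N_le_ae (Y_ideal mx Yy xy) Yy xy. Qed.

Lemma N0 : N (fun _ => 0) = 0.
Proof.
case: hY => _ [_ [+ _ _ _ _]] => /(_ _ Y0) [_ ->] //.
exact: aeW.
Qed.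

Lemma N_ge0 y : Y y -> 0 <= N y.
Proof.
by move=> Yy; rewrite -N0 N_le_ae //; [exact: Y0 | apply: aeW => t; rewrite normr0].
Qed.

Lemma N_eq_ae x y : Y x -> Y y -> (\forall t \ae nu, x t = y t) -> N x = N y.
Proof.
by move=> Yx Yy H; apply: le_anti; rewrite !N_le_ae //; apply: filterS H => t ->.
Qed.

Lemma N_abs y : Y y -> N (fun t => `|y t|) = N y.
Proof.
move=> Yy; have Y_absy := Y_abs Yy.
by apply: le_anti; rewrite !N_le_ae //; apply: aeW => t; rewrite normr_id.
Qed.

End BanachFunctionSpace.

Section PositiveOperator.
Context (R : realType) d (T : measurableType d) (mu : {measure set T -> \bar R})
  d' (Om : measurableType d') (nu : {measure set Om -> \bar R})
  (Y : set (Om -> R)) (N : (Om -> R) -> R).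
Hypothesis hY : banach_function_space nu Y N.
Variable S : (T -> R) -> (Om -> R).
Hypothesis SY : forall f, Linf mu f -> Y (S f).
Hypothesis Slin : forall (a : R) f g, Linf mu f -> Linf mu g ->
  Defs.ae_eq nu (S (fun t => a * f t + g t)) (fun w => a * S f w + S g w).
Hypothesis Spos : positive_op mu nu S.
Implicit Types (f g h : T -> R).

Let S_ext f g : f =1 g -> S f = S g.
Proof. by move=> /funext ->. Qed.

Lemma lin_op0 : \forall w \ae nu, S (fun _ => 0) w = 0.
Proof.
have := Slin 1 (Linf_cst mu 0) (Linf_cst mu 0).
rewrite (@S_ext (fun _ => 1 * 0 + 0) (fun _ => 0)) => [|t]; last by rewrite mulr0 addr0.
by apply: filterS => w; rewrite mul1r => h; lra.
Qed.

Lemma lin_opD f g : Linf mu f -> Linf mu g ->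
  \forall w \ae nu, S (fun t => f t + g t) w = S f w + S g w.
Proof.
move=> Lf Lg; have := Slin 1 Lf Lg.
rewrite (@S_ext (fun t => 1 * f t + g t) (fun t => f t + g t)) => [|t]; last by rewrite mul1r.
by apply: filterS => w ->; rewrite mul1r.
Qed.

Lemma lin_opZ (a : R) f : Linf mu f ->
  \forall w \ae nu, S (fun t => a * f t) w = a * S f w.
Proof.
move=> Lf; have := Slin a Lf (Linf_cst mu 0).
rewrite (@S_ext (fun t => a * f t + 0) (fun t => a * f t)) => [|t]; last by rewrite addr0.
by move=> H; apply: filterS (filterI H lin_op0) => w [-> ->]; rewrite addr0.
Qed.

Lemma lin_opD3 f g h : Linf mu f -> Linf mu g -> Linf mu h ->
  \forall w \ae nu, S (fun t => f t + g t + h t) w = S f w + S g w + S h w.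
Proof.
move=> Lf Lg Lh.
apply: filterS (filterI (lin_opD (LinfD Lf Lg) Lh) (lin_opD Lf Lg)).
by move=> w [-> ->].
Qed.

Lemma pos_op_le f g : Linf mu f -> Linf mu g -> (\forall t \ae mu, f t <= g t) ->
  \forall w \ae nu, S f w <= S g w.
Proof.
move=> Lf Lg fg; have := Spos (Linf_comb (-1) Lf Lg).
have : \forall t \ae mu, 0 <= -1 * f t + g t.
  by apply: filterS fg => t; rewrite mulN1r addrC subr_ge0.
move=> /[swap] /[apply] H; apply: filterS (filterI H (Slin (-1) Lf Lg)) => w [].
by move=> H1 E; move: H1; rewrite E mulN1r addrC subr_ge0.
Qed.

Lemma pos_op_abs f h : Linf mu f -> Linf mu h -> (\forall t \ae mu, `|f t| <= h t) ->
  \forall w \ae nu, `|S f w| <= S h w.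
Proof.
move=> Lf Lh fh.
have le_f : \forall w \ae nu, S f w <= S h w.
  by apply: pos_op_le Lf Lh _; apply: filterS fh => t; apply: le_trans (ler_norm _).
have le_opp : \forall w \ae nu, S (fun t => -1 * f t) w <= S h w.
  apply: pos_op_le (LinfZ (-1) Lf) Lh _; apply: filterS fh => t.
  by apply: le_trans; rewrite mulN1r -normrN ler_norm.
apply: filterS (filterI le_f (filterI le_opp (lin_opZ (-1) Lf))).
by move=> w [le1 [H1 E]]; move: H1; rewrite E mulN1r ler_norml le1 andbT lerNl.
Qed.

Lemma pos_op_sandwich f h (a b : R) : Linf mu f -> Linf mu h ->
  (\forall t \ae mu, a * h t <= f t <= b * h t) ->
  \forall w \ae nu, a * S h w <= S f w <= b * S h w.
Proof.
move=> Lf Lh H.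
have lower : \forall w \ae nu, S (fun t => a * h t) w <= S f w.
  by apply: pos_op_le (LinfZ a Lh) Lf _; apply: filterS H => t /andP[].
have upper : \forall w \ae nu, S f w <= S (fun t => b * h t) w.
  by apply: pos_op_le Lf (LinfZ b Lh) _; apply: filterS H => t /andP[].
apply: filterS (filterI (filterI lower upper) (filterI (lin_opZ a Lh) (lin_opZ b Lh))).
by move=> w [[+ +] [Ea Eb]]; rewrite Ea Eb => -> ->.
Qed.

Lemma pos_op_norm_le f : Linf mu f ->
  N (S f) <= linf_norm mu f * N (S (fun _ => 1)).
Proof.
move=> Lf; have L1 := Linf_cst mu 1; have := linf_norm_ge0 mu f.
set c := linf_norm mu f => c_ge0.
have le_c1 : \forall w \ae nu, `|S f w| <= S (fun t => c * 1) w.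
  apply: (pos_op_abs Lf (LinfZ c L1)).
  by apply: filterS (linf_norm_ae Lf) => t; rewrite mulr1.
rewrite -(ger0_norm c_ge0) -(NZ hY _ (SY L1)).
apply: (N_le_ae hY (SY Lf) (YZ hY c (SY L1))).
apply: filterS (filterI le_c1 (lin_opZ c L1)) => w [+ E].
by rewrite E => /le_trans; apply; apply: ler_norm.
Qed.

Lemma op_norm_pos_op : op_norm mu N S = N (S (fun _ => 1)).
Proof.
have L1 := Linf_cst mu 1.
have n1 : linf_norm mu (fun _ => 1) <= 1.
  by apply: linf_norm_le => //; apply: aeW => t; rewrite normr1.
apply: le_anti; apply/andP; split.
  apply: ge_sup; first by exists (N (S (fun _ => 1))), (fun _ => 1).
  move=> _ [f [Lf nf] <-]; apply: le_trans (pos_op_norm_le Lf) _.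
  by rewrite ler_piMl // (N_ge0 hY (SY L1)).
apply: ub_le_sup; last by exists (fun _ => 1).
exists (N (S (fun _ => 1))) => _ [f [Lf nf] <-]; apply: le_trans (pos_op_norm_le Lf) _.
by rewrite ler_piMl // (N_ge0 hY (SY L1)).
Qed.

End PositiveOperator.

Section GluedOperator.
Context (R : realType) d (T : measurableType d) (mu : {measure set T -> \bar R})
  d' (Om : measurableType d') (nu : {measure set Om -> \bar R})
  (Y : set (Om -> R)) (N : (Om -> R) -> R).
Hypothesis hY : banach_function_space nu Y N.
Variable S : (T -> R) -> (Om -> R).
Hypothesis SY : forall f, Linf mu f -> Y (S f).
Hypothesis Scompat : forall f g, Linf mu f -> Linf mu g -> Defs.ae_eq mu f g ->
  Defs.ae_eq nu (S f) (S g).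
Hypothesis Slin : forall (a : R) f g, Linf mu f -> Linf mu g ->
  Defs.ae_eq nu (S (fun t => a * f t + g t)) (fun w => a * S f w + S g w).
Hypothesis Spos : positive_op mu nu S.
Variables (c : R) (j : Om -> R) (hp hm : T -> R).
Hypothesis c_ge0 : 0 <= c.
Hypotheses (j_meas : measurable_fun setT j) (j01 : forall w, 0 <= j w <= 1).
Hypotheses (hp_meas : measurable_fun setT hp) (hp01 : forall t, 0 <= hp t <= 1).
Hypotheses (hm_meas : measurable_fun setT hm) (hm01 : forall t, 0 <= hm t <= 1).
Implicit Types (f g : T -> R).

Definition glued_op f w :=
  c * (j w * S (fun t => f t * hp t) w + (1 - j w) * S (fun t => f t * hm t) w).

Let norm_le1 (x : R) : 0 <= x <= 1 -> `|x| <= 1.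
Proof. by case/andP => x_ge0 x_le1; rewrite ger0_norm. Qed.

Let Linf_hp f : Linf mu f -> Linf mu (fun t => f t * hp t).
Proof. by move=> Lf; apply: Linf_mul_bounded Lf hp_meas _ => t; apply: norm_le1. Qed.

Let Linf_hm f : Linf mu f -> Linf mu (fun t => f t * hm t).
Proof. by move=> Lf; apply: Linf_mul_bounded Lf hm_meas _ => t; apply: norm_le1. Qed.

Lemma glued_op_Y f : Linf mu f -> Y (glued_op f).
Proof.
move=> Lf; apply: (YZ hY c); apply: (YD hY).
  apply: (Y_mul_bounded hY j_meas); last exact: SY (Linf_hp Lf).
  by move=> w; apply: norm_le1.
apply: (@Y_mul_bounded _ _ _ _ _ _ hY (fun w => 1 - j w)).
- exact: measurable_funB (measurable_cst (1 : R)) j_meas.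
- by move=> w; apply: norm_le1; have := j01 w; lra.
- exact: SY (Linf_hm Lf).
Qed.

Lemma glued_op_compat f g : Linf mu f -> Linf mu g -> Defs.ae_eq mu f g ->
  Defs.ae_eq nu (glued_op f) (glued_op g).
Proof.
move=> Lf Lg fg.
have Ep : Defs.ae_eq nu (S (fun t => f t * hp t)) (S (fun t => g t * hp t)).
  by apply: Scompat (Linf_hp Lf) (Linf_hp Lg) _; apply: filterS fg => t ->.
have Em : Defs.ae_eq nu (S (fun t => f t * hm t)) (S (fun t => g t * hm t)).
  by apply: Scompat (Linf_hm Lf) (Linf_hm Lg) _; apply: filterS fg => t ->.
by apply: filterS (filterI Ep Em) => w [Epw Emw]; rewrite /glued_op Epw Emw.
Qed.

Lemma glued_op_lin (a : R) f g : Linf mu f -> Linf mu g ->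
  Defs.ae_eq nu (glued_op (fun t => a * f t + g t)) (fun w => a * glued_op f w + glued_op g w).
Proof.
move=> Lf Lg; rewrite /glued_op.
have -> : (fun t => (a * f t + g t) * hp t) = (fun t => a * (f t * hp t) + g t * hp t).
  by apply/funext => t; ring.
have -> : (fun t => (a * f t + g t) * hm t) = (fun t => a * (f t * hm t) + g t * hm t).
  by apply/funext => t; ring.
apply: filterS (filterI (Slin a (Linf_hp Lf) (Linf_hp Lg)) (Slin a (Linf_hm Lf) (Linf_hm Lg))).
by move=> w [-> ->]; ring.
Qed.

Lemma glued_op_pos : positive_op mu nu glued_op.
Proof.
move=> f Lf f_ge0.
have Sp : \forall w \ae nu, 0 <= S (fun t => f t * hp t) w.
  apply: (Spos (Linf_hp Lf)); apply: filterS f_ge0 => t ft.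
  by rewrite mulr_ge0 //; case/andP: (hp01 t).
have Sm : \forall w \ae nu, 0 <= S (fun t => f t * hm t) w.
  apply: (Spos (Linf_hm Lf)); apply: filterS f_ge0 => t ft.
  by rewrite mulr_ge0 //; case/andP: (hm01 t).
apply: filterS (filterI Sp Sm) => w [p m]; rewrite mulr_ge0 //.
by have /andP[? ?] := j01 w; rewrite addr_ge0 // mulr_ge0 // subr_ge0.
Qed.

Lemma glued_op_bounded : bounded_op mu nu Y N glued_op.
Proof.
split; [exact: glued_op_Y | exact: glued_op_compat | exact: glued_op_lin |].
exists (N (glued_op (fun _ => 1))) => f Lf; rewrite mulrC.
exact: (pos_op_norm_le hY glued_op_Y glued_op_lin glued_op_pos Lf).
Qed.

Lemma op_norm_glued_op : op_norm mu N glued_op = N (glued_op (fun _ => 1)).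
Proof. exact: (op_norm_pos_op hY glued_op_Y glued_op_lin glued_op_pos). Qed.

End GluedOperator.

Section UniformMonotonicity.
Context (R : realType) d (Om : measurableType d) (nu : {measure set Om -> \bar R})
  (Y : set (Om -> R)) (N : (Om -> R) -> R) (delta : R -> R).
Hypothesis hY : banach_function_space nu Y N.
Hypothesis hUM : unif_monotone_with nu Y N delta.

(* Uniform monotonicity applied to [x / N x] and [y / N x]. *)
Lemma unif_monotone_tail e x y : 0 < e -> Y x -> Y y ->
  (\forall t \ae nu, 0 <= x t) -> (\forall t \ae nu, 0 <= y t) ->
  N (fun t => x t + y t) <= 1 -> 1 <= (1 + delta e) * N x -> N y <= e.
Proof.
move=> e_gt0 Yx Yy x_ge0 y_ge0 Nxy_le1 Nx_large.
have Yxy := YD hY Yx Yy.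
have Nx_le1 : N x <= 1.
  apply: le_trans Nxy_le1; apply: (N_le_ae hY Yx Yxy).
  apply: filterS (filterI x_ge0 y_ge0) => t [xt yt].
  by rewrite !ger0_norm ?addr_ge0 // lerDl.
have Nx_gt0 : 0 < N x.
  rewrite lt_def (N_ge0 hY Yx) andbT; apply: contraTneq Nx_large => ->.
  by rewrite mulr0 ler10.
set k := (N x)^-1.
have k_ge0 : 0 <= k by rewrite invr_ge0 ltW.
have kNx : k * N x = 1 by rewrite mulVf ?gt_eqF.
have := hUM e_gt0 (YZ hY k Yx) (YZ hY k Yy).
rewrite !(NZ hY) // ger0_norm // => /(_ kNx).
have -> : (fun t => k * x t + k * y t) = (fun t => k * (x t + y t)).
  by apply/funext => t; rewrite mulrDr.
rewrite (NZ hY _ Yxy) ger0_norm //.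
have scaled_ge0 z : (\forall t \ae nu, 0 <= z t) -> \forall t \ae nu, 0 <= k * z t.
  by apply: filterS => t; apply: mulr_ge0.
move=> /(_ (scaled_ge0 _ x_ge0) (scaled_ge0 _ y_ge0)).
have k_le : k <= 1 + delta e.
  by rewrite -[k]mul1r (le_trans (ler_wpM2r k_ge0 Nx_large)) // -mulrA [N x * k]mulrC kNx mulr1.
have kNxy_le : k * N (fun t => x t + y t) <= 1 + delta e.
  by apply: le_trans k_le; rewrite ler_piMr.
move=> /(_ kNxy_le) kNy_le; have Ny_ge0 := N_ge0 hY Yy.
nra.
Qed.
End UniformMonotonicity.

Definition bpb_eta (R : realType) (delta : R -> R) (eps : R) : R :=
  Num.min (eps / 2) (delta (eps ^+ 2 / 8) / (1 + delta (eps ^+ 2 / 8))).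

Section Eta.
Context (R : realType) (delta : R -> R) (eps : R).
Hypotheses (eps_gt0 : 0 < eps) (delta_gt0 : 0 < delta (eps ^+ 2 / 8)).

Lemma bpb_eta_range : 0 < bpb_eta delta eps < eps.
Proof.
apply/andP; split; last by rewrite gt_min ltr_pdivrMr // ltr_pMr // ltr1n.
by rewrite lt_min divr_gt0 //= divr_gt0 // addr_gt0.
Qed.

Lemma bpb_eta_large (n : R) : 1 - bpb_eta delta eps < n ->
  1 <= (1 + delta (eps ^+ 2 / 8)) * n.
Proof.
move=> n_large; have := delta_gt0; set dl := delta _ => dl_gt0.
have eta_le : (1 + dl) * bpb_eta delta eps <= dl.
  by rewrite mulrC -ler_pdivlMr ?addr_gt0 // ge_min lexx orbT.
have : 0 < (1 + dl) * (n - (1 - bpb_eta delta eps)).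
  by rewrite mulr_gt0 ?subr_gt0 // addr_gt0.
nra.
Qed.

End Eta.

Section Construction.
Context (R : realType) (delta : R -> R) d (T : measurableType d)
  (mu : {measure set T -> \bar R})
  d' (Om : measurableType d') (nu : {measure set Om -> \bar R})
  (Y : set (Om -> R)) (N : (Om -> R) -> R).
Hypothesis hY : banach_function_space nu Y N.
Hypothesis hUM : unif_monotone_with nu Y N delta.
Variable eps : R.
Hypothesis eps01 : 0 < eps < 1.
Hypothesis delta_gt0 : 0 < delta (eps ^+ 2 / 8).
Variable S : (T -> R) -> (Om -> R).
Hypothesis SY : forall f, Linf mu f -> Y (S f).
Hypothesis Scompat : forall f g, Linf mu f -> Linf mu g -> Defs.ae_eq mu f g ->
  Defs.ae_eq nu (S f) (S g).
Hypothesis Slin : forall (a : R) f g, Linf mu f -> Linf mu g ->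
  Defs.ae_eq nu (S (fun t => a * f t + g t)) (fun w => a * S f w + S g w).
Hypothesis Spos : positive_op mu nu S.
Hypothesis S_norm1 : op_norm mu N S = 1.
Variable x0 : T -> R.
Hypothesis Lx0 : Linf mu x0.
Hypothesis x0_norm1 : linf_norm mu x0 = 1.
Hypothesis Sx0_large : 1 - bpb_eta delta eps < N (S x0).
Implicit Types (f g : T -> R).

Let S_ext f g : f =1 g -> S f = S g.
Proof. by move=> /funext ->. Qed.

Let x0_le1 : \forall t \ae mu, `|x0 t| <= 1.
Proof. by rewrite -x0_norm1; exact: linf_norm_ae. Qed.

Definition ind_hi t : R := if 1 - eps / 2 < x0 t then 1 else 0.
Definition ind_lo t : R := if x0 t < eps / 2 - 1 then 1 else 0.
Definition ind_mid t : R := 1 - ind_hi t - ind_lo t.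

Lemma ind_cases t :
  [/\ ind_hi t = 1, ind_lo t = 0, ind_mid t = 0 & 1 - eps / 2 < x0 t] \/
  [/\ ind_hi t = 0, ind_lo t = 1, ind_mid t = 0 & x0 t < eps / 2 - 1] \/
  [/\ ind_hi t = 0, ind_lo t = 0, ind_mid t = 1 & eps / 2 - 1 <= x0 t <= 1 - eps / 2].
Proof.
have /andP[eps_gt0 eps_lt1] := eps01.
rewrite /ind_mid /ind_hi /ind_lo; case: ltP => hi; case: ltP => lo.
- lra.
- by left; split => //; lra.
- by right; left; split => //; lra.
- by right; right; split; rewrite ?subr0 ?lo ?hi.
Qed.

Lemma ind_hi01 t : 0 <= ind_hi t <= 1.
Proof. by case: (ind_cases t) => [[-> _ _ _]|[[-> _ _ _]|[-> _ _ _]]]; rewrite lexx ler01. Qed.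
Lemma ind_lo01 t : 0 <= ind_lo t <= 1.
Proof. by case: (ind_cases t) => [[_ -> _ _]|[[_ -> _ _]|[_ -> _ _]]]; rewrite lexx ler01. Qed.
Lemma ind_mid01 t : 0 <= ind_mid t <= 1.
Proof. by case: (ind_cases t) => [[_ _ -> _]|[[_ _ -> _]|[_ _ -> _]]]; rewrite lexx ler01. Qed.

Lemma ind_hi_measurable : measurable_fun setT ind_hi.
Proof.
apply: measurable_fun_ifT => //.
exact: measurable_fun_ltr (measurable_cst _) (Linf_measurable Lx0).
Qed.
Lemma ind_lo_measurable : measurable_fun setT ind_lo.
Proof.
apply: measurable_fun_ifT => //.
exact: measurable_fun_ltr (Linf_measurable Lx0) (measurable_cst _).
Qed.
Lemma ind_mid_measurable : measurable_fun setT ind_mid.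
Proof.
apply: measurable_funB ind_lo_measurable.
exact: measurable_funB (measurable_cst (1 : R)) ind_hi_measurable.
Qed.

Let unit_norm_le1 (h : T -> R) : (forall t, 0 <= h t <= 1) -> forall t, `|h t| <= 1.
Proof. by move=> h01 t; have /andP[? ?] := h01 t; rewrite ger0_norm. Qed.

Let Linf_unit (h : T -> R) : measurable_fun setT h -> (forall t, 0 <= h t <= 1) -> Linf mu h.
Proof. by move=> mh h01; apply: (Linf_bounded (c := 1) mh); apply: aeW; apply: unit_norm_le1. Qed.

Let Linf_mul_unit f (h : T -> R) : Linf mu f -> measurable_fun setT h ->
  (forall t, 0 <= h t <= 1) -> Linf mu (fun t => f t * h t).
Proof. by move=> Lf mh h01; apply: Linf_mul_bounded Lf mh (unit_norm_le1 h01). Qed.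

Let L_hi := Linf_unit ind_hi_measurable ind_hi01.
Let L_lo := Linf_unit ind_lo_measurable ind_lo01.
Let L_mid := Linf_unit ind_mid_measurable ind_mid01.

Lemma S_split f : Linf mu f -> \forall w \ae nu,
  S f w = S (fun t => f t * ind_hi t) w + S (fun t => f t * ind_lo t) w +
          S (fun t => f t * ind_mid t) w.
Proof.
move=> Lf.
have E : S f = S (fun t => f t * ind_hi t + f t * ind_lo t + f t * ind_mid t).
  by apply: S_ext => t; rewrite /ind_mid; ring.
rewrite E; apply: (lin_opD3 Slin).
- exact: Linf_mul_unit Lf ind_hi_measurable ind_hi01.
- exact: Linf_mul_unit Lf ind_lo_measurable ind_lo01.
- exact: Linf_mul_unit Lf ind_mid_measurable ind_mid01.
Qed.

Lemma S_ind_ge0 : \forall w \ae nu,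
  [/\ 0 <= S ind_hi w, 0 <= S ind_lo w & 0 <= S ind_mid w].
Proof.
have ge0 h : Linf mu h -> (forall t, 0 <= h t <= 1) -> \forall w \ae nu, 0 <= S h w.
  by move=> Lh h01; apply: (Spos Lh); apply: aeW => t; case/andP: (h01 t).
have P_hi := ge0 _ L_hi ind_hi01.
have P_lo := ge0 _ L_lo ind_lo01.
have P_mid := ge0 _ L_mid ind_mid01.
by apply: filterS (filterI P_hi (filterI P_lo P_mid)) => w [? []].
Qed.

Lemma S1_split : \forall w \ae nu, S (fun _ => 1) w = S ind_hi w + S ind_lo w + S ind_mid w.
Proof.
apply: filterS (S_split (Linf_cst mu 1)) => w ->.
by rewrite !(@S_ext (fun t => 1 * _ t) _ (fun t => mul1r _)).
Qed.

Lemma S_x0_bounds : \forall w \ae nu,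
  [/\ (1 - eps / 2) * S ind_hi w <= S (fun t => x0 t * ind_hi t) w <= 1 * S ind_hi w,
      -1 * S ind_lo w <= S (fun t => x0 t * ind_lo t) w <= (eps / 2 - 1) * S ind_lo w &
      (eps / 2 - 1) * S ind_mid w <= S (fun t => x0 t * ind_mid t) w
        <= (1 - eps / 2) * S ind_mid w].
Proof.
have /andP[eps_gt0 eps_lt1] := eps01.
have [p_hi p_lo p_mid] : [/\
    \forall t \ae mu, (1 - eps / 2) * ind_hi t <= x0 t * ind_hi t <= 1 * ind_hi t,
    \forall t \ae mu, -1 * ind_lo t <= x0 t * ind_lo t <= (eps / 2 - 1) * ind_lo t &
    \forall t \ae mu, (eps / 2 - 1) * ind_mid t <= x0 t * ind_mid t
                        <= (1 - eps / 2) * ind_mid t].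
  split; apply: filterS x0_le1 => t /ler_normlP[? ?];
    by case: (ind_cases t) => [[E1 E2 E3 ?]|[[E1 E2 E3 ?]|[E1 E2 E3 /andP[? ?]]]];
      rewrite ?E1 ?E2 ?E3; apply/andP; split; lra.
have sandwich h a b : Linf mu h -> measurable_fun setT h -> (forall t, 0 <= h t <= 1) ->
    (\forall t \ae mu, a * h t <= x0 t * h t <= b * h t) ->
    \forall w \ae nu, a * S h w <= S (fun t => x0 t * h t) w <= b * S h w.
  by move=> Lh mh h01; apply: (pos_op_sandwich Slin Spos (Linf_mul_unit Lx0 mh h01) Lh).
have B_hi := sandwich _ _ _ L_hi ind_hi_measurable ind_hi01 p_hi.
have B_lo := sandwich _ _ _ L_lo ind_lo_measurable ind_lo01 p_lo.
have B_mid := sandwich _ _ _ L_mid ind_mid_measurable ind_mid01 p_mid.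
by apply: filterS (filterI B_hi (filterI B_lo B_mid)) => w [? []].
Qed.

Definition ind_Sx0_ge0 w : R := if 0 <= S x0 w then 1 else 0.

Lemma ind_Sx0_ge0_cases w :
  (ind_Sx0_ge0 w = 1 /\ 0 <= S x0 w) \/ (ind_Sx0_ge0 w = 0 /\ S x0 w < 0).
Proof. by rewrite /ind_Sx0_ge0; case: leP; [left|right]. Qed.

Lemma ind_Sx0_ge0_01 w : 0 <= ind_Sx0_ge0 w <= 1.
Proof. by case: (ind_Sx0_ge0_cases w) => -[-> _]; rewrite lexx ler01. Qed.

Lemma ind_Sx0_ge0_measurable : measurable_fun setT ind_Sx0_ge0.
Proof.
apply: measurable_fun_ifT => //.
exact: measurable_fun_ler (measurable_cst _) (Y_measurable hY (SY Lx0)).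
Qed.

Definition main_part w :=
  ind_Sx0_ge0 w * S ind_hi w + (1 - ind_Sx0_ge0 w) * S ind_lo w.
Definition remainder w :=
  ind_Sx0_ge0 w * S ind_lo w + (1 - ind_Sx0_ge0 w) * S ind_hi w + S ind_mid w.

Let Y_mix y z : Y y -> Y z ->
  Y (fun w => ind_Sx0_ge0 w * y w + (1 - ind_Sx0_ge0 w) * z w).
Proof.
move=> Yy Yz; apply: (YD hY).
  apply: (Y_mul_bounded hY ind_Sx0_ge0_measurable) Yy => w.
  by have /andP[? ?] := ind_Sx0_ge0_01 w; rewrite ger0_norm.
apply: (@Y_mul_bounded _ _ _ _ _ _ hY (fun w => 1 - ind_Sx0_ge0 w)) Yz.
  exact: measurable_funB (measurable_cst (1 : R)) ind_Sx0_ge0_measurable.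
by move=> w; have /andP[? ?] := ind_Sx0_ge0_01 w; rewrite ger0_norm ?subr_ge0 //; lra.
Qed.

Lemma Y_main_part : Y main_part.
Proof. exact: Y_mix (SY L_hi) (SY L_lo). Qed.

Lemma Y_remainder : Y remainder.
Proof. exact: (YD hY (Y_mix (SY L_lo) (SY L_hi)) (SY L_mid)). Qed.

(* Off [ind_hi] (resp. [ind_lo]) the function [x0] stays [eps/2] away from [1]
   (resp. [-1]); this margin pays for [eps/2 * remainder]. *)
Lemma main_remainder_split : \forall w \ae nu,
  [/\ `|S x0 w| + eps / 2 * remainder w <= S (fun _ => 1) w, 0 <= remainder w,
      0 <= main_part w & main_part w + remainder w = S (fun _ => 1) w].
Proof.
have /andP[eps_gt0 eps_lt1] := eps01.
apply: filterS (filterI (S_split Lx0) (filterI S_x0_bounds (filterI S_ind_ge0 S1_split))).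
move=> w [E [[/andP[hi1 hi2] /andP[lo1 lo2] /andP[mid1 mid2]] [[p_hi p_lo p_mid] ->]]].
rewrite /main_part /remainder.
case: (ind_Sx0_ge0_cases w) => -[-> Sx0w]; rewrite E in Sx0w *.
- by rewrite ger0_norm //; split; nra.
- by rewrite ltr0_norm //; split; nra.
Qed.

Lemma N_S1 : N (S (fun _ => 1)) = 1.
Proof. by rewrite -(op_norm_pos_op hY SY Slin Spos). Qed.

Lemma N_main_part_le1 : N main_part <= 1.
Proof.
rewrite -N_S1; apply: (N_le_ae hY Y_main_part (SY (Linf_cst mu 1))).
apply: filterS main_remainder_split => w [_ rem_ge0 main_ge0 <-].
by rewrite !ger0_norm ?(addr_ge0 main_ge0 rem_ge0) // lerDl.
Qed.

Lemma N_remainder_le : N remainder <= eps / 4.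
Proof.
have /andP[eps_gt0 eps_lt1] := eps01.
have e_gt0 : 0 < eps ^+ 2 / 8 by rewrite divr_gt0 // exprn_gt0.
have Y_absSx0 := Y_abs hY (SY Lx0).
have Y_rem := YZ hY (eps / 2) Y_remainder.
have absSx0_ge0 : \forall w \ae nu, 0 <= `|S x0 w| by apply: aeW => w.
have rem_ge0 : \forall w \ae nu, 0 <= eps / 2 * remainder w.
  by apply: filterS main_remainder_split => w [_ ? _ _]; rewrite mulr_ge0 // divr_ge0 // ltW.
have sum_le1 : N (fun w => `|S x0 w| + eps / 2 * remainder w) <= 1.
  (* rewrite only the right-hand [1]: the numerals [2] and [8] are built from [1] *)
  rewrite -[X in _ <= X]N_S1; apply: (N_le_ae hY (YD hY Y_absSx0 Y_rem) (SY (Linf_cst mu 1))).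
  apply: filterS (filterI main_remainder_split rem_ge0) => w [[le_S1 _ _ _] ?].
  by rewrite ger0_norm ?addr_ge0 // (le_trans le_S1) // ler_norm.
have Sx0_large_scaled : 1 <= (1 + delta (eps ^+ 2 / 8)) * N (fun w => `|S x0 w|).
  by rewrite (N_abs hY (SY Lx0)) bpb_eta_large.
have := unif_monotone_tail hY hUM e_gt0 Y_absSx0 Y_rem absSx0_ge0 rem_ge0 sum_le1 Sx0_large_scaled.
rewrite (NZ hY _ Y_remainder) ger0_norm; last by rewrite divr_ge0 // ltW.
rewrite expr2 => Nrem; nra.
Qed.

Lemma N_main_part_ge : 1 - eps / 4 <= N main_part.
Proof.
have N_sum : N (fun w => main_part w + remainder w) = 1.
  rewrite -N_S1; apply: (N_eq_ae hY (YD hY Y_main_part Y_remainder) (SY (Linf_cst mu 1))).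
  by apply: filterS main_remainder_split => w [_ _ _ ->].
have := N_triangle hY Y_main_part Y_remainder; have := N_remainder_le; lra.
Qed.

Let N_main_part_gt0 : 0 < N main_part.
Proof. by have := N_main_part_ge; have /andP[? ?] := eps01; lra. Qed.

Let N_main_part_inv_ge1 : 1 <= (N main_part)^-1.
Proof. by rewrite invf_ge1 // N_main_part_le1. Qed.

Let N_main_part_inv_ge0 : 0 <= (N main_part)^-1.
Proof. by rewrite invr_ge0 ltW. Qed.

Definition norm_attaining_op := glued_op S (N main_part)^-1 ind_Sx0_ge0 ind_hi ind_lo.

Lemma norm_attaining_op_bounded : bounded_op mu nu Y N norm_attaining_op.
Proof.
exact: (glued_op_bounded hY SY Scompat Slin Spos N_main_part_inv_ge0
  ind_Sx0_ge0_measurable ind_Sx0_ge0_01 ind_hi_measurable ind_hi01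
  ind_lo_measurable ind_lo01).
Qed.

Lemma norm_attaining_op_pos : positive_op mu nu norm_attaining_op.
Proof.
exact: (glued_op_pos Spos N_main_part_inv_ge0 ind_Sx0_ge0_01
  ind_hi_measurable ind_hi01 ind_lo_measurable ind_lo01).
Qed.

Lemma norm_attaining_op_one :
  norm_attaining_op (fun _ => 1) = fun w => (N main_part)^-1 * main_part w.
Proof.
apply/funext => w; rewrite /norm_attaining_op /glued_op /main_part.
by rewrite !(@S_ext (fun t => 1 * _ t) _ (fun t => mul1r _)).
Qed.

Lemma norm_attaining_op_norm1 : op_norm mu N norm_attaining_op = 1.
Proof.
rewrite (op_norm_glued_op hY SY Slin Spos N_main_part_inv_ge0
  ind_Sx0_ge0_measurable ind_Sx0_ge0_01 ind_hi_measurable ind_hi01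
  ind_lo_measurable ind_lo01).
by rewrite -/norm_attaining_op norm_attaining_op_one (NZ hY _ Y_main_part) ger0_norm ?mulVf ?gt_eqF.
Qed.

Definition u0 t := ind_hi t - ind_lo t + x0 t * ind_mid t.

Lemma u0_bounds : \forall t \ae mu,
  `|x0 t| <= `|u0 t| <= 1 /\ `|u0 t - x0 t| <= eps / 2.
Proof.
have /andP[eps_gt0 eps_lt1] := eps01.
apply: filterS x0_le1 => t x0t; have /ler_normlP[? ?] := x0t; rewrite /u0.
case: (ind_cases t) => [[-> -> -> ?]|[[-> -> -> ?]|[-> -> -> _]]];
  rewrite ?mulr0 ?mulr1 ?addr0 ?subr0 ?sub0r ?add0r ?subrr ?normrN ?normr1 ?normr0 ?x0t ?lexx;
  split => //; rewrite ?ler_norml; first [lra | apply/andP; split; lra].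
Qed.

Lemma Linf_u0 : Linf mu u0.
Proof.
apply: (@Linf_bounded _ _ _ _ _ 1); last by apply: filterS u0_bounds => t [/andP[]].
apply: measurable_funD; first exact: measurable_funB ind_hi_measurable ind_lo_measurable.
exact: measurable_funM (Linf_measurable Lx0) ind_mid_measurable.
Qed.

Lemma u0_norm1 : linf_norm mu u0 = 1.
Proof. by apply: linf_norm_dominated_eq1 Lx0 x0_norm1 _; apply: filterS u0_bounds => t []. Qed.

Lemma u0_close : linf_norm mu (fun t => u0 t - x0 t) < eps.
Proof.
have /andP[eps_gt0 eps_lt1] := eps01.
have close : \forall t \ae mu, `|u0 t - x0 t| <= eps / 2 by apply: filterS u0_bounds => t [].
by apply: le_lt_trans (linf_norm_le _ close) _; [rewrite divr_ge0 // ltW | lra].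
Qed.

Let Y_norm_attaining_op f : Linf mu f -> Y (norm_attaining_op f).
Proof. by case: norm_attaining_op_bounded => + _ _ _; apply. Qed.

Lemma norm_attaining_op_u0 : N (norm_attaining_op u0) = 1.
Proof.
have E_hi : S (fun t => u0 t * ind_hi t) = S ind_hi.
  apply: S_ext => t; rewrite /u0.
  by case: (ind_cases t) => [[E1 E2 E3 _]|[[E1 E2 E3 _]|[E1 E2 E3 _]]]; rewrite E1 E2 E3; ring.
have E_lo : S (fun t => u0 t * ind_lo t) = S (fun t => -1 * ind_lo t).
  apply: S_ext => t; rewrite /u0.
  by case: (ind_cases t) => [[E1 E2 E3 _]|[[E1 E2 E3 _]|[E1 E2 E3 _]]]; rewrite E1 E2 E3; ring.
have abs_eq : \forall w \ae nu, `|norm_attaining_op u0 w| = (N main_part)^-1 * main_part w.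
  apply: filterS (filterI (lin_opZ Slin (-1) L_lo) S_ind_ge0) => w [E_opp [hi_ge0 lo_ge0 _]].
  rewrite /norm_attaining_op /glued_op E_hi E_lo E_opp /main_part normrM ger0_norm //.
  by case: (ind_Sx0_ge0_cases w) => -[-> _];
    rewrite ?subrr ?subr0 ?mul0r ?mul1r ?add0r ?addr0 ?mulN1r ?normrN ger0_norm.
rewrite -(N_abs hY (Y_norm_attaining_op Linf_u0)).
rewrite (N_eq_ae hY (Y_abs hY (Y_norm_attaining_op Linf_u0)) (YZ hY _ Y_main_part) abs_eq).
by rewrite (NZ hY _ Y_main_part) ger0_norm // mulVf ?gt_eqF.
Qed.

Lemma norm_attaining_op_sub_le f : Linf mu f -> linf_norm mu f <= 1 ->
  N (fun w => norm_attaining_op f w - S f w) <= eps / 2.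
Proof.
move=> Lf f_norm_le1; have := N_main_part_inv_ge1; set c := (N main_part)^-1 => c_ge1.
have f_le1 : \forall t \ae mu, `|f t| <= 1.
  by apply: filterS (linf_norm_ae Lf) => t /le_trans; apply.
have piece h : Linf mu h -> measurable_fun setT h -> (forall t, 0 <= h t <= 1) ->
    \forall w \ae nu, `|S (fun t => f t * h t) w| <= S h w.
  move=> Lh mh h01; apply: (pos_op_abs Slin Spos (Linf_mul_unit Lf mh h01) Lh).
  apply: filterS f_le1 => t ft; have /andP[h_ge0 _] := h01 t.
  by rewrite normrM (ger0_norm h_ge0) ler_piMl.
have B_hi := piece _ L_hi ind_hi_measurable ind_hi01.
have B_lo := piece _ L_lo ind_lo_measurable ind_lo01.
have B_mid := piece _ L_mid ind_mid_measurable ind_mid01.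
have Y_bound := YD hY (YZ hY (c - 1) Y_main_part) Y_remainder.
apply: (@le_trans _ _ (N (fun w => (c - 1) * main_part w + remainder w))).
  apply: (N_le_dominated hY _ Y_bound).
    exact: measurable_funB (Y_measurable hY (Y_norm_attaining_op Lf)) (Y_measurable hY (SY Lf)).
  apply: filterS (filterI (S_split Lf)
    (filterI B_hi (filterI B_lo (filterI B_mid main_remainder_split)))).
  move=> w [E [/ler_normlP[? ?] [/ler_normlP[? ?] [/ler_normlP[? ?] [_ rem_ge0 main_ge0 _]]]]].
  rewrite E /norm_attaining_op /glued_op -/c [X in _ <= X]ger0_norm; last first.
    by rewrite addr_ge0 // mulr_ge0 // subr_ge0.
  move: main_ge0 rem_ge0; rewrite /main_part /remainder.
  by case: (ind_Sx0_ge0_cases w) => -[-> _] *; rewrite ler_norml; apply/andP; split; nra.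
rewrite (le_trans (N_triangle hY (YZ hY _ Y_main_part) Y_remainder)) //.
rewrite (NZ hY _ Y_main_part) ger0_norm ?subr_ge0 // mulrBl mul1r mulVf ?gt_eqF //.
by have := N_remainder_le; have := N_main_part_ge; lra.
Qed.

Lemma norm_attaining_op_close : op_norm mu N (fun f w => norm_attaining_op f w - S f w) < eps.
Proof.
have /andP[eps_gt0 _] := eps01.
apply: (@le_lt_trans _ _ (eps / 2)); last lra.
apply: ge_sup; last by move=> _ [f [Lf f_le1] <-]; apply: norm_attaining_op_sub_le.
exists (N (fun w => norm_attaining_op (fun _ => 1) w - S (fun _ => 1) w)), (fun _ => 1) => //.
by split; [exact: Linf_cst | apply: linf_norm_le => //; apply: aeW => t; rewrite normr1].
Qed.

Lemma bpb_pos_construction : exists (u : T -> R) (Top : (T -> R) -> (Om -> R)),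
  [/\ Linf mu u, linf_norm mu u = 1,
      bounded_op mu nu Y N Top, positive_op mu nu Top & op_norm mu N Top = 1] /\
  [/\ N (Top u) = 1,
      linf_norm mu (fun t => u t - x0 t) < eps &
      op_norm mu N (fun f w => Top f w - S f w) < eps].
Proof.
exists u0, norm_attaining_op; split; split.
- exact: Linf_u0.
- exact: u0_norm1.
- exact: norm_attaining_op_bounded.
- exact: norm_attaining_op_pos.
- exact: norm_attaining_op_norm1.
- exact: norm_attaining_op_u0.
- exact: u0_close.
- exact: norm_attaining_op_close.
Qed.

End Construction.

Theorem theorem2p5 (R : realType) (delta : R -> R)
  (hdelta : forall e : R, 0 < e -> 0 < delta e) :
  exists eta : R -> R,
    (forall eps : R, 0 < eps < 1 -> 0 < eta eps < eps) /\
    forall (d : measure_display) (T : measurableType d)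
           (mu : {measure set T -> \bar R})
           (d' : measure_display) (Om : measurableType d')
           (nu : {measure set Om -> \bar R})
           (Y : set (Om -> R)) (N : (Om -> R) -> R),
      banach_function_space nu Y N ->
      unif_monotone_with nu Y N delta ->
      BPBp_pos_with mu nu Y N eta.
Proof.
have delta_gt0 eps : 0 < eps -> 0 < delta (eps ^+ 2 / 8).
  by move=> eps_gt0; apply: hdelta; rewrite divr_gt0 // exprn_gt0.
exists (bpb_eta delta); split.
  by move=> eps /andP[eps_gt0 _]; apply: bpb_eta_range => //; apply: delta_gt0.
move=> d T mu d' Om nu Y N hY hUM eps eps01 S x0 [SY Scompat Slin _] Spos S_norm1.
have /andP[eps_gt0 _] := eps01.
exact: (bpb_pos_construction hY hUM eps01 (delta_gt0 _ eps_gt0) SY Scompat Slin Spos S_norm1).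
Qed.
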